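(* Let $N$ be a finite set of services, all controlled by a single (monopolistic) seller, let $v:2^N\to\mathbb{R}_+$ be a monotone submodular valuation with $v(\emptyset)=0$, and let $X$ be a maximal decision map for $v$. Then $$\max_{p\in\mathbb{R}^N_+}u_1(p)=\max_{S\subseteq N}\sum_{i\in S}v(\{i\}\mid S\setminus\{i\}),$$ where $u_1(p)=\sum_{j\in N}p_j\cdot\mathbf{1}\{j\in X(p)\}$.
   Context: Marginal value $v(T\mid S)=v(S\cup T)-v(S)$; submodular means $v(S\cup T)+v(S\cap T)\le v(S)+v(T)$. For $p\in\mathbb{R}^N_+$, $p(S)=\sum_{j\in S}p_j$, $D(v;p)=\arg\max_{S\subseteq N}(v(S)-p(S))$. A decision map is $X:\mathbb{R}^N_+\to2^N$ with $X(p)\in D(v;p)$ for all $p$; it is maximal if for every $p$ there is no $S'\in D(v;p)$ with $X(p)\subsetneq S'$. The monopolistic seller chooses a price $p_j$ for each service and earns $u_1(p)$. *)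

From HB Require Import structures.
From mathcomp Require Import all_boot all_order all_algebra.
From mathcomp Require Import reals.
Set Implicit Arguments. Unset Strict Implicit. Unset Printing Implicit Defensive.
Import Order.TTheory GRing.Theory Num.Theory.
Local Open Scope ring_scope.

Section Defs.
Variables (R : realType) (N : finType).

Definition marg (v : {set N} -> R) (T S : {set N}) : R := v (S :|: T) - v S.

Definition monotone_val (v : {set N} -> R) :=
  forall S T : {set N}, S \subset T -> v S <= v T.

Definition submodular (v : {set N} -> R) :=
  forall S T : {set N}, v (S :|: T) + v (S :&: T) <= v S + v T.

Definition valuation (v : {set N} -> R) := (forall S, 0 <= v S) /\ v set0 = 0.

Definition nonneg_price (p : N -> R) := forall j, 0 <= p j.

Definition price (p : N -> R) (S : {set N}) : R := \sum_(j in S) p j.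

Definition demand (v : {set N} -> R) (p : N -> R) (S : {set N}) :=
  forall S' : {set N}, v S' - price p S' <= v S - price p S.

Definition decision_map (v : {set N} -> R) (X : (N -> R) -> {set N}) :=
  forall p, nonneg_price p -> demand v p (X p).

Definition maximal_decision_map (v : {set N} -> R) (X : (N -> R) -> {set N}) :=
  decision_map v X /\
  forall p, nonneg_price p ->
    ~ exists S' : {set N}, demand v p S' /\ X p \proper S'.

Definition revenue (X : (N -> R) -> {set N}) (p : N -> R) : R :=
  \sum_(j : N) p j * (j \in X p)%:R.

Definition marg_sum (v : {set N} -> R) (S : {set N}) : R :=
  \sum_(i in S) marg v [set i] (S :\ i).

End Defs.

From mathcomp Require Import all_boot all_order all_algebra.
From mathcomp Require Import reals.
From mathcomp Require Import lra.
Import Order.TTheory GRing.Theory Num.Theory.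
Local Open Scope ring_scope.
Set Implicit Arguments.
Unset Strict Implicit.

(* Upper bound: at a demanded set S no item can be dropped profitably, so each
   price p_i, i in S, is at most the marginal value v(S) - v(S \ i); hence the
   revenue is at most the marginal sum of S.
   Lower bound: take S maximising the marginal sum, price its items at their
   marginal values and every other item above v(N).  By submodularity, adding
   the items of S to any subset T of S one at a time gains at least their
   marginal values in S, so S is demanded; items outside S are never demanded,
   so maximality of X forces X(p) = S, with revenue the marginal sum of S. *)

Section MonopolyRevenue.
Variables (R : realType) (N : finType).
Implicit Types (v : {set N} -> R) (p : N -> R) (S T : {set N}).

Lemma price_setD1 p S i : i \in S -> price p S = p i + price p (S :\ i).
Proof.
move=> iS; rewrite /price (bigD1 i) //=; congr (_ + _).
by apply: eq_bigl => j; rewrite !inE andbC.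
Qed.

Lemma price_ge0 p S : nonneg_price p -> 0 <= price p S.
Proof. by move=> hp; apply: sumr_ge0 => j _. Qed.

Lemma marg_set1D1 v S i : i \in S -> marg v [set i] (S :\ i) = v S - v (S :\ i).
Proof. by move=> iS; rewrite /marg setUC setD1K. Qed.

Lemma revenueE (X : (N -> R) -> {set N}) p : revenue X p = price p (X p).
Proof.
rewrite /revenue /price [RHS]big_mkcond; apply: eq_bigr => j _.
by case: (j \in X p); rewrite ?mulr1 ?mulr0.
Qed.

Lemma demand_price_le_marg v p S i :
  demand v p S -> i \in S -> p i <= v S - v (S :\ i).
Proof. by move=> dS iS; have := dS (S :\ i); rewrite (price_setD1 p iS); lra. Qed.

Lemma demand_price_le_marg_sum v p S : demand v p S -> price p S <= marg_sum v S.
Proof.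
move=> dS; apply: ler_sum => i iS.
by rewrite marg_set1D1 //; apply: demand_price_le_marg.
Qed.

Lemma submodular_marg_le v S T i : submodular v ->
  T \subset S -> i \in S -> i \notin T -> v S - v (S :\ i) <= v (i |: T) - v T.
Proof.
move=> sub TS iS iT.
have U : (i |: T) :|: (S :\ i) = S.
  apply/setP => x; rewrite !inE; case: (x =P i) => [->|_] /=; first by rewrite iS.
  by case xT: (x \in T) => //=; rewrite (subsetP TS x xT).
have I : (i |: T) :&: (S :\ i) = T.
  apply/setP => x; rewrite !inE; case: (x =P i) => [->|_] /=.
    by rewrite (negbTE iT).
  by case xT: (x \in T) => //=; rewrite (subsetP TS x xT).
by have := sub (i |: T) (S :\ i); rewrite U I; lra.
Qed.

Lemma submodular_sum_marg_le v S T : submodular v -> T \subset S ->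
  v T + \sum_(i in S :\: T) (v S - v (S :\ i)) <= v S.
Proof.
move=> sub TS; move cST: #|S :\: T| => n.
elim: n T cST TS => [|n IH] T cST TS.
  have ST : S \subset T by rewrite -(setD_eq0 S T) -cards_eq0 cST.
  have -> : T = S by apply/eqP; rewrite eqEsubset TS ST.
  by rewrite setDv big_set0 addr0.
have [i iST] : exists i, i \in S :\: T by apply/card_gt0P; rewrite cST.
have /setDP[iS iT] := iST.
have ST' : S :\: (i |: T) = (S :\: T) :\ i.
  by apply/setP => x; rewrite !inE; case: (x == i); rewrite ?andbF ?andbT.
have cST' : #|S :\: (i |: T)| = n.
  by move: cST; rewrite ST' (cardsD1 i) iST => -[].
have := IH _ cST'; rewrite subUset sub1set iS TS ST' => /(_ isT) IH'.
rewrite (big_setD1 i iST) /=.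
by have := submodular_marg_le sub TS iS iT; lra.
Qed.

Section MarginalPricing.
Variables (v : {set N} -> R) (S0 : {set N}).
Hypotheses (val_v : valuation v) (mono_v : monotone_val v).

Definition marginal_price (j : N) : R :=
  if j \in S0 then v S0 - v (S0 :\ j) else v setT + 1.

Lemma marginal_price_ge0 : nonneg_price marginal_price.
Proof.
move=> j; rewrite /marginal_price; case: ifP => _.
  by rewrite subr_ge0; apply: mono_v; apply: subsetDl.
by have := val_v.1 setT; lra.
Qed.

Lemma marginal_price_setI_gt S : ~~ (S \subset S0) ->
  v S - price marginal_price S <
  v (S :&: S0) - price marginal_price (S :&: S0).
Proof.
case/subsetPn => j jS jS0.
have jD : j \in S :\: S0 by rewrite inE jS jS0.
rewrite {1}/price (big_setID S0) /= -/(price _ (S :&: S0)).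
rewrite -/(price _ (S :\: S0)) (price_setD1 _ jD) /marginal_price (negbTE jS0).
have := price_ge0 ((S :\: S0) :\ j) marginal_price_ge0.
have := mono_v (subsetT S); have := val_v.1 (S :&: S0); lra.
Qed.

Lemma marginal_price_split T : T \subset S0 ->
  price marginal_price S0 =
  price marginal_price T + \sum_(i in S0 :\: T) (v S0 - v (S0 :\ i)).
Proof.
move=> TS; rewrite /price (big_setID T) /= (setIidPr TS); congr (_ + _).
by apply: eq_bigr => i /setDP[iS0 _]; rewrite /marginal_price iS0.
Qed.

Lemma marginal_price_demand : submodular v -> demand v marginal_price S0.
Proof.
move=> sub S.
have le_S0 T : T \subset S0 ->
    v T - price marginal_price T <= v S0 - price marginal_price S0.
  move=> TS; rewrite (marginal_price_split TS).
  by have := submodular_sum_marg_le sub TS; lra.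
have [SS0|nSS0] := boolP (S \subset S0); first exact: le_S0.
by have := le_S0 _ (subsetIr S S0); have := marginal_price_setI_gt nSS0; lra.
Qed.

Lemma marginal_price_demand_sub S : demand v marginal_price S -> S \subset S0.
Proof.
move=> dS; apply: contraT => nSS0.
by have := dS (S :&: S0); have := marginal_price_setI_gt nSS0; lra.
Qed.

Lemma marginal_price_price : price marginal_price S0 = marg_sum v S0.
Proof.
by apply: eq_bigr => i iS0; rewrite marg_set1D1 // /marginal_price iS0.
Qed.

End MarginalPricing.

Lemma marg_sum_ge0 v S : monotone_val v -> 0 <= marg_sum v S.
Proof.
move=> mono; apply: sumr_ge0 => i iS.
by rewrite marg_set1D1 // subr_ge0; apply: mono; apply: subsetDl.
Qed.

End MonopolyRevenue.

Theorem mainTheorem14 (R : realType) (N : finType)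
    (v : {set N} -> R) (X : (N -> R) -> {set N}) :
  valuation v -> monotone_val v -> submodular v ->
  maximal_decision_map v X ->
  (exists p : N -> R, nonneg_price p /\
     revenue X p = \big[Num.max/0]_(S : {set N}) marg_sum v S) /\
  (forall p : N -> R, nonneg_price p ->
     revenue X p <= \big[Num.max/0]_(S : {set N}) marg_sum v S).
Proof.
move=> val_v mono_v sub [dec maxX]; split; last first.
  move=> p hp; rewrite revenueE; apply: le_trans (le_bigmax _ _ (X p)).
  exact: demand_price_le_marg_sum (dec p hp).
have [S0 _ ->] := eq_bigmax (x:=0) set0 xpredT (marg_sum v) erefl
  (fun S _ => marg_sum_ge0 S mono_v).
pose p := marginal_price v S0.
have hp : nonneg_price p by apply: marginal_price_ge0.
have XS0 : X p \subset S0 by apply: marginal_price_demand_sub (dec p hp).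
have XE : X p = S0.
  apply/eqP; apply: contraT => ne; case: (maxX p hp).
  by exists S0; split; [apply: marginal_price_demand | rewrite properEneq ne].
by exists p; split; rewrite // revenueE XE marginal_price_price.
Qed.
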